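(* On each of the following classes of Kripke models — all models, symmetric models, transitive models, Euclidean models — $\mathcal{L}(\nabla,\bullet)$ is strictly less expressive than $\mathcal{L}(\Diamond)$. On the class of reflexive models, $\mathcal{L}(\nabla,\bullet)$ and $\mathcal{L}(\Diamond)$ are equally expressive.
   Context: Fix a nonempty set $\mathbf{P}$ of propositional variables. $\mathcal{L}(\nabla,\bullet)$: $\phi::=p\mid\neg\phi\mid\phi\land\phi\mid\nabla\phi\mid\bullet\phi$; $\mathcal{L}(\Diamond)$: $\phi::=p\mid\neg\phi\mid\phi\land\phi\mid\Diamond\phi$ ($p\in\mathbf{P}$). Kripke models $\mathcal{M}=\langle S,R,V\rangle$ ($S\neq\emptyset$, $R\subseteq S\times S$, $V:\mathbf{P}\to\mathcal{P}(S)$). Truth: $\mathcal{M},s\vDash\nabla\phi$ iff there are $t,u$ with $sRt$, $sRu$, $\mathcal{M},t\vDash\phi$, $\mathcal{M},u\nvDash\phi$; $\mathcal{M},s\vDash\bullet\phi$ iff $\mathcal{M},s\vDash\phi$ and there is $t$ with $sRt$, $\mathcal{M},t\nvDash\phi$; $\mathcal{M},s\vDash\Diamond\phi$ iff there is $t$ with $sRt$, $\mathcal{M},t\vDash\phi$. For languages $L_1,L_2$ and a class $C$ of models, $L_1$ is at least as expressive as $L_2$ on $C$ if for every $\phi\in L_2$ there is $\psi\in L_1$ with $\mathcal{M},s\vDash\phi\iff\mathcal{M},s\vDash\psi$ for all $\mathcal{M}\in C$ and states $s$; equally expressive means each is at least as expressive as the other; $L_1$ is strictly less expressive than $L_2$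 on $C$ if $L_2$ is at least as expressive as $L_1$ on $C$ but not vice versa. *)

Set Implicit Arguments.

Section Syntax.
Variable P : Type.

Inductive formNB : Type :=
| NBvar : P -> formNB
| NBneg : formNB -> formNB
| NBand : formNB -> formNB -> formNB
| NBnabla : formNB -> formNB
| NBbullet : formNB -> formNB.

Inductive formD : Type :=
| Dvar : P -> formD
| Dneg : formD -> formD
| Dand : formD -> formD -> formD
| Ddia : formD -> formD.

Record model : Type := Model {
  st : Type;
  st_nonempty : inhabited st;
  rel : st -> st -> Prop;
  val : P -> st -> Prop
}.

Fixpoint satNB (M : model) (s : st M) (phi : formNB) {struct phi} : Prop :=
  match phi with
  | NBvar p => val M p s
  | NBneg f => ~ satNB M s f
  | NBand f g => satNB M s f /\ satNB M s g
  | NBnabla f => exists t u, rel M s t /\ rel M s u /\ satNB M t f /\ ~ satNB M u f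
  | NBbullet f => satNB M s f /\ exists t, rel M s t /\ ~ satNB M t f
  end.

Fixpoint satD (M : model) (s : st M) (phi : formD) {struct phi} : Prop :=
  match phi with
  | Dvar p => val M p s
  | Dneg f => ~ satD M s f
  | Dand f g => satD M s f /\ satD M s g
  | Ddia f => exists t, rel M s t /\ satD M t f
  end.

Definition all_models (M : model) : Prop := True.
Definition symmetric_model (M : model) : Prop :=
  forall s t, rel M s t -> rel M t s.
Definition transitive_model (M : model) : Prop :=
  forall s t u, rel M s t -> rel M t u -> rel M s u.
Definition euclidean_model (M : model) : Prop :=
  forall s t u, rel M s t -> rel M s u -> rel M t u.
Definition reflexive_model (M : model) : Prop :=
  forall s, rel M s s.

Definition at_least_as_expressive (L1 L2 : Type)
  (sat1 : forall M : model, st M -> L1 -> Prop)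
  (sat2 : forall M : model, st M -> L2 -> Prop)
  (C : model -> Prop) : Prop :=
  forall phi : L2, exists psi : L1,
    forall M : model, C M -> forall s : st M, sat2 M s phi <-> sat1 M s psi.

Definition equally_expressive (L1 L2 : Type)
  (sat1 : forall M : model, st M -> L1 -> Prop)
  (sat2 : forall M : model, st M -> L2 -> Prop)
  (C : model -> Prop) : Prop :=
  at_least_as_expressive sat1 sat2 C /\ at_least_as_expressive sat2 sat1 C.

Definition strictly_less_expressive (L1 L2 : Type)
  (sat1 : forall M : model, st M -> L1 -> Prop)
  (sat2 : forall M : model, st M -> L2 -> Prop)
  (C : model -> Prop) : Prop :=
  at_least_as_expressive sat2 sat1 C /\ ~ at_least_as_expressive sat1 sat2 C.

End Syntax.

(* Both operators are definable from the diamond: [nabla f] is [<>f /\ <>~f]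
   and [bullet f] is [f /\ <>~f].  Conversely, a one-point model with a loop
   and a one-point model without successors satisfy the same formulas of
   L(nabla, bullet), since nabla and bullet are false at both points, yet
   [<>p] separates them; both models are symmetric, transitive and Euclidean.
   On reflexive models the diamond is recovered as [<>f <-> f \/ nabla f]. *)

From Stdlib Require Import Classical.

Section Translations.
Variable P : Type.

Fixpoint dia_of_nb (f : formNB P) : formD P :=
  match f with
  | NBvar p => Dvar p
  | NBneg g => Dneg (dia_of_nb g)
  | NBand g h => Dand (dia_of_nb g) (dia_of_nb h)
  | NBnabla g => Dand (Ddia (dia_of_nb g)) (Ddia (Dneg (dia_of_nb g)))
  | NBbullet g => Dand (dia_of_nb g) (Ddia (Dneg (dia_of_nb g)))
  end.

Lemma satD_dia_of_nb (M : model P) (f : formNB P) (s : st M) :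
  satD M s (dia_of_nb f) <-> satNB M s f.
Proof.
  revert s; induction f as [p | g IH | g IHg h IHh | g IH | g IH]; intro s;
    cbn; try setoid_rewrite IH.
  - tauto.
  - tauto.
  - rewrite IHg, IHh; tauto.
  - split.
    + intros [[t [Rst Ht]] [u [Rsu Hu]]]; exists t, u; tauto.
    + intros [t [u [Rst [Rsu [Ht Hu]]]]]; split; [exists t | exists u]; tauto.
  - tauto.
Qed.

Lemma dia_at_least_as_expressive_nb (C : model P -> Prop) :
  at_least_as_expressive (@satD P) (@satNB P) C.
Proof.
  intro f; exists (dia_of_nb f); intros M _ s.
  symmetry; apply satD_dia_of_nb.
Qed.

Definition nb_or (f g : formNB P) : formNB P :=
  NBneg (NBand (NBneg f) (NBneg g)).

Lemma satNB_or (M : model P) (s : st M) (f g : formNB P) :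
  satNB M s (nb_or f g) <-> satNB M s f \/ satNB M s g.
Proof. cbn; destruct (classic (satNB M s f)); tauto. Qed.

Fixpoint nb_of_dia (f : formD P) : formNB P :=
  match f with
  | Dvar p => NBvar p
  | Dneg g => NBneg (nb_of_dia g)
  | Dand g h => NBand (nb_of_dia g) (nb_of_dia h)
  | Ddia g => nb_or (nb_of_dia g) (NBnabla (nb_of_dia g))
  end.

Lemma reflexive_diaE (M : model P) (Q : st M -> Prop) (s : st M) :
  reflexive_model M ->
  (exists t, rel M s t /\ Q t) <->
  Q s \/ exists t u, rel M s t /\ rel M s u /\ Q t /\ ~ Q u.
Proof.
  intro refl; split.
  - intros [t [Rst Qt]]; destruct (classic (Q s)) as [Qs | nQs]; [left | right].
    + exact Qs.
    + exists t, s; auto.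
  - intros [Qs | [t [_ [Rst [_ [Qt _]]]]]]; [exists s | exists t]; auto.
Qed.

Lemma satNB_nb_of_dia (M : model P) (f : formD P) (s : st M) :
  reflexive_model M -> satNB M s (nb_of_dia f) <-> satD M s f.
Proof.
  intro refl; revert s; induction f as [p | g IH | g IHg h IHh | g IH]; intro s.
  - reflexivity.
  - cbn; rewrite IH; reflexivity.
  - cbn; rewrite IHg, IHh; reflexivity.
  - cbn [nb_of_dia satD]; rewrite satNB_or, (@reflexive_diaE M (fun t => satD M t g) s refl).
    cbn; setoid_rewrite IH; reflexivity.
Qed.

Lemma nb_at_least_as_expressive_dia_reflexive :
  at_least_as_expressive (@satNB P) (@satD P) (@reflexive_model P).
Proof.
  intro f; exists (nb_of_dia f); intros M refl s.
  symmetry; apply satNB_nb_of_dia, refl.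
Qed.

End Translations.

Section Separation.
Variable P : Type.

Definition point_model (R : Prop) : model P :=
  @Model P unit (inhabits tt) (fun _ _ => R) (fun _ _ => True).

Definition loop_model : model P := point_model True.
Definition dead_end_model : model P := point_model False.

Lemma satNB_loop_dead_end (f : formNB P) :
  satNB loop_model tt f <-> satNB dead_end_model tt f.
Proof.
  induction f as [p | g IH | g IHg h IHh | g IH | g IH]; cbn.
  - reflexivity.
  - rewrite IH; reflexivity.
  - rewrite IHg, IHh; reflexivity.
  - split; intros [[] [[] [Rt [_ [Ht Hu]]]]]; tauto.
  - split; intros [Hs [[] [Rt Ht]]]; tauto.
Qed.

Lemma nb_not_at_least_as_expressive_dia (C : model P -> Prop) :
  inhabited P -> C loop_model -> C dead_end_model ->
  ~ at_least_as_expressive (@satNB P) (@satD P) C.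
Proof.
  intros [p] Cloop Cdead expr.
  destruct (expr (Ddia (Dvar p))) as [f Hf].
  assert (Hloop : satNB loop_model tt f).
  { apply (Hf _ Cloop tt); exists tt; cbn; auto. }
  apply satNB_loop_dead_end, (Hf _ Cdead tt) in Hloop.
  destruct Hloop as [_ [[] _]].
Qed.

End Separation.

Theorem proposition3 (P : Type) (HP : inhabited P) :
  strictly_less_expressive (@satNB P) (@satD P) (@all_models P) /\
  strictly_less_expressive (@satNB P) (@satD P) (@symmetric_model P) /\
  strictly_less_expressive (@satNB P) (@satD P) (@transitive_model P) /\
  strictly_less_expressive (@satNB P) (@satD P) (@euclidean_model P) /\
  equally_expressive (@satNB P) (@satD P) (@reflexive_model P).
Proof.
  repeat split;
    try apply dia_at_least_as_expressive_nb;
    try (apply nb_not_at_least_as_expressive_dia; [exact HP | hnf; auto ..]).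
  apply nb_at_least_as_expressive_dia_reflexive.
Qed.
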